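(* Fix a prime $p$ and a finite group $G$. Then: (i) if $N\unlhd G$, then $M_p(G)=M_p(N)M_p(G/N)$; (ii) $M_p(G)\ge |G|/|\mathrm{Ord}(G,p)|$, i.e. the proportion of elements of $G$ of $p$-power order is at least $1/M_p(G)$; (iii) if $G$ is a subdirect subgroup of a direct product $G_1\times\cdots\times G_t$ of finite groups, then $M_p(G)\le\prod_{i=1}^t M_p(G_i)$.
   Context: $\mathrm{Ord}(G,p)$ is the set of elements of $G$ of $p$-power order. For a finite simple group $S$: $M_p(S)=|S|$ if $S$ is cyclic of prime order different from $p$; $M_p(S)=1$ if $S$ is cyclic of order $p$; and if $S$ is nonabelian, $M_p(S)$ is the least $M$ such that for every $p$-element $\alpha\in\mathrm{Aut}(S)$ the coset $S\alpha\subseteq\mathrm{Aut}(S)$ contains a $p$-element $x$ with $|C_S(x)|\le M$. For a finite group $G$, $M_p(G)=\prod M_p(S)$ over the composition factors $S$ of $G$ counted with multiplicity. $G\le G_1\times\cdots\times G_t$ is subdirect if each coordinate projection $G\to G_i$ is surjective. *)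

From HB Require Import structures.
From mathcomp Require Import all_boot all_fingroup all_solvable.
Set Implicit Arguments. Unset Strict Implicit. Unset Printing Implicit Defensive.
Local Open Scope group_scope.

Section ExtProd.
Variables (t : nat) (gT : 'I_t -> finGroupType).

Definition prodG : Type := {dffun forall i : 'I_t, gT i}.
HB.instance Definition _ := Finite.on prodG.

Definition prodG_mul (f g : prodG) : prodG := [ffun i => f i * g i].
Definition prodG_one : prodG := [ffun i => 1].
Definition prodG_inv (f : prodG) : prodG := [ffun i => (f i)^-1].

Lemma prodG_mulA : associative prodG_mul.
Proof. by move=> f g h; apply/ffunP=> i; rewrite !ffunE mulgA. Qed.
Lemma prodG_mul1 : left_id prodG_one prodG_mul.
Proof. by move=> f; apply/ffunP=> i; rewrite !ffunE mul1g. Qed.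
Lemma prodG_mulV : left_inverse prodG_one prodG_inv prodG_mul.
Proof. by move=> f; apply/ffunP=> i; rewrite !ffunE mulVg. Qed.

HB.instance Definition _ :=
  Finite_isGroup.Build prodG prodG_mulA prodG_mul1 prodG_mulV.

Definition proj (i : 'I_t) (f : prodG) : gT i := (f : {dffun forall i, gT i}) i.
End ExtProd.

Section Mp.
Variable p : nat.

Section SimpleGroup.
Variable gT : finGroupType.

(* For x in Aut(S) (a permutation of gT fixing the outside of S), C_S(x)    *)
(* is identified with the set of points of S fixed by x (S = Inn(S) inside *)
(* Aut(S), S nonabelian simple so Z(S) = 1).                                *)
Definition fixS (S : {set gT}) (x : {perm gT}) : {set gT} :=
  [set s in S | x s == s].

(* M bounds: every p-element a of Aut(S) has a p-element x in the coset    *)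
(* Inn(S) a (x = conj_aut S s * a, s in S) with |C_S(x)| <= M.             *)
Definition MpBound (S : {group gT}) (M : nat) : bool :=
  [forall a in Aut S, p.-elt a ==>
     [exists s in S, p.-elt (conj_aut S s * a) &&
                     (#|fixS S (conj_aut S s * a)| <= M)]].

Lemma MpBound_exists (S : {group gT}) : exists M, MpBound S M.
Proof.
exists #|S|; apply/forall_inP => a _; apply/implyP => pa.
apply/exists_inP; exists 1; first exact: group1.
have -> : conj_aut S 1 = 1 by apply: (morph1 (conj_aut_morphism S)).
rewrite mul1g pa /=; apply: subset_leq_card.
by apply/subsetP => x; rewrite inE => /andP[].
Qed.

Definition Mp_nonab (S : {group gT}) : nat := ex_minn (MpBound_exists S).

(* M_p of a finite simple group S; S is cyclic of prime order iff |S| is *)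
(* prime.                                                                 *)
Definition Mp_simple (S : {group gT}) : nat :=
  if prime #|S| then (if #|S| == p then 1 else #|S|)%N else Mp_nonab S.
End SimpleGroup.

Definition Mp_factor (gT : finGroupType) (H K : {group gT}) : nat :=
  Mp_simple (H / K)%G.

Definition compseries (gT : finGroupType) (G : {group gT}) : seq {group gT} :=
  xchoose (exists_comps G).

Definition Mp (gT : finGroupType) (G : {group gT}) : nat :=
  \prod_(m <- pairmap (@Mp_factor gT) G (compseries G)) m.
End Mp.

Definition Ord (gT : finGroupType) (G : {set gT}) (p : nat) : {set gT} :=
  [set x in G | p.-elt x].

(* M_p is defined along one fixed composition series.  We first show that    *)
(* M_p of a simple group is an isomorphism invariant, so by Jordan-Hoelder   *)
(* M_p(G) can be computed along any composition series; transporting series  *)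
(* along isomorphisms and quotient maps gives invariance of M_p and (i).     *)
(* (iii) follows from (i) by cutting G with the kernels of the projections   *)
(* one coordinate at a time.  (ii) is the case g = 1 of the stronger bound   *)
(*   |N| <= M_p(N) |{p-elements of N g}|   for a p-element g normalising N,  *)
(* proved by induction on |N|: the bound is closed under extensions K <| N,  *)
(* which reduces it to N minimal normal in <g>N.  Then either N is an        *)
(* elementary abelian q-group, where the bound is immediate, or N is a       *)
(* product of conjugates of a nonabelian simple group S; in that case some   *)
(* x = s g with s in S, chosen through the definition of M_p(S), is a        *)
(* p-element whose N-class has at least |N| / M_p(S) elements.               *)

From HB Require Import structures.
From mathcomp Require Import all_boot all_fingroup all_solvable.
Set Implicit Arguments. Unset Strict Implicit. Unset Printing Implicit Defensive.
Local Open Scope group_scope.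

Lemma quotient_injm_isog (gT rT : finGroupType) (D A B : {group gT})
    (f : {morphism D >-> rT}) :
  'injm f -> A \subset D -> B <| A -> A / B \isog f @* A / f @* B.
Proof.
move=> injf sAD nsBA; have injg : 'injm (restrm sAD f) by rewrite injm_restrm.
have := sub_isog (subxx (A / B)) (injm_quotm nsBA injg).
by rewrite morphim_quotm !morphim_restrm setIid (setIidPr (normal_sub nsBA)).
Qed.

Lemma cosetpre_quotient_isog (gT : finGroupType) (N : {group gT})
    (A B : {group coset_of N}) :
  B <| A -> coset N @*^-1 A / coset N @*^-1 B \isog A / B.
Proof.
move=> nsBA; have nsN (C : {group coset_of N}) : N <| coset N @*^-1 C.
  by rewrite /normal sub_cosetpre subsetIl.
have nsBA' : coset N @*^-1 B <| coset N @*^-1 A.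
  by rewrite morphpre_normal ?sub_im_coset.
have := third_isog (normal_sub (nsN B)) (nsN A) nsBA'.
by rewrite !cosetpreK isog_sym.
Qed.

Section AutTransport.
Variables (gT rT : finGroupType) (D S : {group gT}) (f : {morphism D >-> rT}).
Hypotheses (injf : 'injm f) (sSD : S \subset D).
Local Notation iso := (Aut_isom injf sSD).

Lemma Aut_isom_conj_aut s : s \in S -> iso (conj_aut S s) = conj_aut (f @* S) (f s).
Proof.
move=> Ss; apply: (eq_Aut (Aut_Aut_isom _ _ _)); rewrite ?Aut_aut //.
move=> _ /morphimP[y Dy Sy ->].
by rewrite Aut_isomE ?Aut_aut // !conj_autE ?mem_morphim ?morphJ ?(subsetP sSD).
Qed.

Lemma card_fixS_Aut_isom a :
  a \in Aut S -> #|fixS (f @* S) (iso a)| <= #|fixS S a|.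
Proof.
move=> Aa; apply: leq_trans (leq_imset_card f (fixS S a)); apply: subset_leq_card.
apply/subsetP=> z; rewrite inE => /andP[/morphimP[y Dy Sy ->]].
rewrite Aut_isomE // => /eqP fay; apply/imsetP; exists y => //.
rewrite inE Sy; apply/eqP/(injmP injf) => //.
by rewrite (subsetP sSD) ?Aut_closed.
Qed.

Lemma Aut_isom_p_elt (p : nat) a : a \in Aut S -> p.-elt (iso a) = p.-elt a.
Proof. by move=> Aa; rewrite /p_elt (order_injm (injm_Aut_isom injf sSD)). Qed.
End AutTransport.

Section MpInvariance.
Variable p : nat.

Lemma MpBound_isog (gT rT : finGroupType) (S : {group gT}) (S' : {group rT}) M :
  S \isog S' -> MpBound p S M -> MpBound p S' M.
Proof.
case/isogP=> f injf defS' boundS.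
have -> : S' = (f @* S)%G by apply: val_inj; rewrite /= defS'.
have sSS : S \subset S := subxx S.
apply/forall_inP=> b Ab; apply/implyP.
have : b \in Aut_isom injf sSS @* Aut S by rewrite im_Aut_isom.
case/morphimP=> a _ Aa ->; rewrite Aut_isom_p_elt // => pa.
have /forall_inP/(_ a Aa) := boundS; rewrite pa => /exists_inP[s Ss /andP[ps fs]].
have Asa : conj_aut S s * a \in Aut S by rewrite groupM ?Aut_aut.
apply/exists_inP; exists (f s); first exact: mem_morphim.
rewrite -Aut_isom_conj_aut // -morphM ?Aut_aut // Aut_isom_p_elt // ps /=.
exact: leq_trans (card_fixS_Aut_isom _ _ Asa) fs.
Qed.

Lemma Mp_simple_isog (gT rT : finGroupType) (S : {group gT}) (S' : {group rT}) :
  S \isog S' -> Mp_simple p S = Mp_simple p S'.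
Proof.
move=> isoS; rewrite /Mp_simple (card_isog isoS); case: ifP => // _.
rewrite /Mp_nonab; apply: eq_ex_minn => M; apply/idP/idP; apply: MpBound_isog => //.
by rewrite isog_sym.
Qed.

(* M_p of a simple group is positive: the identity coset contains the     *)
(* p-element 1 whose centraliser is all of S.                             *)
Lemma Mp_simple_gt0 (gT : finGroupType) (S : {group gT}) : 0 < Mp_simple p S.
Proof.
rewrite /Mp_simple; case: ifP => _; first by case: ifP.
rewrite /Mp_nonab; case: ex_minnP => m boundS _; rewrite lt0n; apply/eqP=> m0.
move: boundS; rewrite m0 => /forall_inP/(_ 1 (group1 _)); rewrite p_elt1 /=.
case/exists_inP=> s Ss /andP[_]; rewrite leqn0 => /eqP/cards0_eq/setP/(_ 1).
by rewrite !inE group1 mulg1 conj_autE // conj1g eqxx.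
Qed.
End MpInvariance.

Section CompositionSeries.
Variable p : nat.

Definition Mp_section (gT : finGroupType) (sec : section gT) : nat :=
  Mp_simple p (section_group sec).

Lemma pairmap_Mp_section (gT : finGroupType) (G : {group gT}) s :
  pairmap (@Mp_factor p gT) G s = map (@Mp_section gT) (pairmap (@mkSec _) G s).
Proof. by elim: s G => //= H s IH G; rewrite IH. Qed.

(* Jordan-Hoelder: M_p(G) may be computed along any composition series of G. *)
Lemma Mp_comps (gT : finGroupType) (G : {group gT}) s : comps G s ->
  Mp p G = (\prod_(m <- pairmap (@Mp_factor p gT) G s) m)%N.
Proof.
move=> csG; rewrite /Mp /compseries !pairmap_Mp_section.
have factorsE t : map (@Mp_section gT) (pairmap (@mkSec _) G t) =
                  map (@Mp_section gT) (mkfactors G t).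
  rewrite /mkfactors -map_comp; apply: eq_map => sec /=.
  by apply: Mp_simple_isog; rewrite isog_sym; apply: section_reprP.
rewrite !factorsE; apply/perm_big/perm_map.
exact: JordanHolderUniqueness (xchooseP (exists_comps G)) csG.
Qed.

Local Notation maxrel gT := [rel x y : {group gT} | maxnormal y x x].

Lemma path_transport (gT rT : finGroupType) (D : {set gT})
    (F : {group gT} -> {group rT}) :
  (forall K L : {group gT}, K \subset D -> maxnormal L K K ->
     maxnormal (F L) (F K) (F K) /\ K / L \isog F K / F L) ->
  forall (K : {group gT}) t, K \subset D -> path (maxrel gT) K t ->
  path (maxrel rT) (F K) (map F t) /\
  pairmap (@Mp_factor p rT) (F K) (map F t) = pairmap (@Mp_factor p gT) K t.
Proof.
move=> F_factor K t; elim: t K => //= L t IHt K sKD /andP[maxLK pathL].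
have [maxFL isoKL] := F_factor K L sKD maxLK.
have sLD : L \subset D := subset_trans (normal_sub (maxnormal_normal maxLK)) sKD.
have [pathFL factorsL] := IHt L sLD pathL.
split; first by rewrite maxFL.
by rewrite factorsL /Mp_factor (Mp_simple_isog p isoKL).
Qed.
End CompositionSeries.

Section MpProperties.
Variable p : nat.

Lemma Mp_isog (gT rT : finGroupType) (G : {group gT}) (H : {group rT}) :
  G \isog H -> Mp p G = Mp p H.
Proof.
case/isogP=> f injf defH.
have -> : H = (f @* G)%G by apply: val_inj; rewrite /= defH.
have [s csG] := exists_comps G; have /compsP[lastG pathG] := csG.
have [|pathF factorsF] := path_transport p (F := fun K => (f @* K)%G) _ (subxx G) pathG.
  move=> K L sKG maxLK; have nsLK := maxnormal_normal maxLK.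
  rewrite injm_maxnormal ?(subset_trans (normal_sub nsLK)) //; split=> //.
  exact: quotient_injm_isog nsLK.
rewrite (Mp_comps p csG) (@Mp_comps p _ _ (map (fun K => (f @* K)%G) s)) ?factorsF //.
apply/compsP; split=> //; rewrite last_map lastG; apply: val_inj; exact: morphim1.
Qed.

(* Part (i): M_p is multiplicative on extensions, since a composition     *)
(* series of G / N lifts to one of G ending at N.                         *)
Lemma Mp_normal (gT : finGroupType) (G N : {group gT}) :
  N <| G -> Mp p G = (Mp p N * Mp p (G / N)%G)%N.
Proof.
move=> nsNG; pose pre (A : {group coset_of N}) := (coset N @*^-1 A)%G.
have [sN csN] := exists_comps N; have [sQ csQ] := exists_comps (G / N)%G.
have /compsP[lastQ pathQ] := csQ.
have [|pathG factorsG] := path_transport p (F := pre) (D := setT) _ (subsetT _) pathQ.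
  move=> A B _ maxBA; have nsBA := maxnormal_normal maxBA.
  have isoBA := cosetpre_quotient_isog nsBA.
  split; last by rewrite isog_sym.
  by rewrite /= -quotient_simple ?(isog_simple isoBA) ?quotient_simple
             ?morphpre_normal ?sub_im_coset.
have preG : pre (G / N)%G = G by apply: val_inj; rewrite /= quotientGK.
have lastN : last G (map pre sQ) = N.
  by rewrite -preG last_map lastQ; apply: val_inj; apply: cosetpre1.
rewrite preG in pathG factorsG.
rewrite (@Mp_comps p _ _ (map pre sQ ++ sN)); last first.
  by apply/compsP; rewrite last_cat cat_path lastN pathG; case/compsP: csN.
by rewrite pairmap_cat big_cat /= lastN factorsG -(Mp_comps p csN) -(Mp_comps p csQ) mulnC.
Qed.

Lemma Mp_gt0 (gT : finGroupType) (G : {group gT}) : 0 < Mp p G.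
Proof.
rewrite /Mp; move: (compseries G) => s.
elim: s (G) => [|H s IHs] K; first by rewrite /= big_nil.
by rewrite /= big_cons muln_gt0 IHs Mp_simple_gt0.
Qed.

Lemma Mp1 (gT : finGroupType) : Mp p (1%G : {group gT}) = 1%N.
Proof.
rewrite /Mp /compseries; have := xchooseP (exists_comps (1%G : {group gT})).
by move/trivg_comps; rewrite eqxx => /esym/eqP->; rewrite big_nil.
Qed.

Lemma Mp_normal_le (gT : finGroupType) (G N : {group gT}) : N <| G -> Mp p N <= Mp p G.
Proof. by move=> nsNG; rewrite (Mp_normal nsNG) leq_pmulr ?Mp_gt0. Qed.

Lemma Mp_simple_group (gT : finGroupType) (S : {group gT}) :
  simple S -> Mp p S = Mp_simple p S.
Proof.
move=> simS; have csS : comps S [:: 1%G] by rewrite /comps eqxx /= -simple_maxnormal simS.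
rewrite (Mp_comps p csS) /= big_cons big_nil muln1 /Mp_factor.
by apply: Mp_simple_isog; rewrite isog_sym; apply: quotient1_isog.
Qed.

(* A q-group with q a prime different from p has all its composition      *)
(* factors cyclic of order q, so M_p equals its order.                    *)
Lemma Mp_pgroup (q : nat) (gT : finGroupType) (N : {group gT}) :
  prime q -> q != p -> q.-group N -> Mp p N = #|N|.
Proof.
move=> q_pr neq_qp; have [n] := ubnP #|N|; elim: n N => // n IHn N /ltnSE-leNn qN.
have [-> | ntN] := eqVneq N 1%G; first by rewrite Mp1 cards1.
have [M maxM] := ex_maxnormal_ntrivg ntN; have nsMN := maxnormal_normal maxM.
rewrite (Mp_normal nsMN) IHn; first last.
- exact: pgroupS (normal_sub nsMN) qN.
- exact: leq_trans (proper_card (maxnormal_proper maxM)) leNn.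
have simQ : simple (N / M)%G by rewrite /= quotient_simple.
have qQ : q.-group (N / M) := quotient_pgroup M qN.
have prQ : prime #|N / M| := simple_sol_prime (pgroup_sol qQ) simQ.
have cardQ : #|N / M| = q by move: qQ; rewrite /pgroup pnatE // => /eqP.
rewrite Mp_simple_group // /Mp_simple /= prQ cardQ (negbTE neq_qp).
by rewrite -cardQ card_quotient ?normal_norm // Lagrange ?normal_sub.
Qed.
End MpProperties.

Section Projections.
Variables (t : nat) (gT : 'I_t -> finGroupType).

Lemma proj_morphM (i : 'I_t) : {in [set: prodG gT] &, {morph @proj t gT i : x y / x * y}}.
Proof. by move=> x y _ _; rewrite /proj /= ffunE. Qed.

Canonical projm i := Morphism (proj_morphM i).

Lemma prodG_eq1 (f : prodG gT) : (forall i, proj i f = 1) -> f = 1.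
Proof. by move=> f1; apply/ffunP=> i; rewrite /= ffunE; apply: f1. Qed.
End Projections.

Section Subdirect.
Variable p : nat.

(* Cutting a normal subgroup L of G by the kernel of a morphism costs at  *)
(* most a factor M_p(f G): the quotient is a normal subgroup of f G.      *)
Lemma Mp_normal_ker (gT rT : finGroupType) (D G L : {group gT})
    (f : {morphism D >-> rT}) :
  G \subset D -> L <| G -> Mp p L <= Mp p (L :&: 'ker f)%G * Mp p (f @* G)%G.
Proof.
move=> sGD nsLG; have sLD := subset_trans (normal_sub nsLG) sGD.
have nsKL : L :&: 'ker f <| L := normalGI sLD (ker_normal f).
have isoL : (L / (L :&: 'ker f))%G \isog f @* L by apply: first_isog_loc.
rewrite (Mp_normal p nsKL) leq_mul2l (Mp_isog p isoL) Mp_normal_le ?orbT //.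
exact: morphim_normal.
Qed.

Variables (t : nat) (gT : 'I_t -> finGroupType).
Variables (Gi : forall i : 'I_t, {group gT i}) (G : {group prodG gT}).
Hypothesis subdirectG : forall i : 'I_t, [set proj i f | f in G] = Gi i :> {set gT i}.

Lemma Mp_subdirect_upto j : j <= t -> exists L : {group prodG gT},
  [/\ L <| G, {in L, forall f (i : 'I_t), i < j -> proj i f = 1}
    & Mp p G <= Mp p L * \prod_(i < t | i < j) Mp p (Gi i)].
Proof.
elim: j => [_ | j IHj lt_jt].
  by exists G; split=> //; rewrite big_pred0 ?muln1.
have [L [nsLG L1 leGL]] := IHj (ltnW lt_jt); pose i0 := Ordinal lt_jt.
exists (L :&: 'ker (projm gT i0))%G; split.
- rewrite /normal subIset ?(normal_sub nsLG) //= normsI ?(normal_norm nsLG) //.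
  exact: subset_trans (subsetT G) (normal_norm (ker_normal _)).
- move=> f /setIP[Lf Kf] i; rewrite ltnS leq_eqVlt => /orP[/eqP ei | lt_ij].
    have -> : i = i0 by apply: val_inj.
    exact: (mker Kf).
  exact: L1.
have G_i0 : Gi i0 = (projm gT i0 @* G)%G.
  by apply: val_inj; rewrite /= morphimEsub ?subsetT // -subdirectG.
apply: leq_trans leGL _; rewrite [X in _ <= _ * X](bigD1 i0) ?ltnSn //= mulnA.
rewrite [X in _ <= _ * X](eq_bigl (fun i : 'I_t => i < j)) => [|i]; last first.
  by rewrite ltnS leq_eqVlt -val_eqE /=; case: ltngtP.
by rewrite leq_mul2r G_i0 Mp_normal_ker ?subsetT ?orbT.
Qed.

(* Part (iii): once all t coordinates are killed, L is trivial. *)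
Lemma Mp_subdirect : Mp p G <= \prod_(i < t) Mp p (Gi i).
Proof.
have [L [_ L1 leGL]] := Mp_subdirect_upto (leqnn t).
have -> : (\prod_(i < t) Mp p (Gi i) = \prod_(i < t | i < t) Mp p (Gi i))%N.
  by apply: eq_bigl => i; rewrite ltn_ord.
suff L_1 : L = 1%G by rewrite L_1 Mp1 mul1n in leGL.
apply/val_inj/trivgP/subsetP=> f Lf; rewrite inE; apply/eqP/prodG_eq1=> i.
exact: L1 Lf i (ltn_ord i).
Qed.
End Subdirect.

Section PcosetExtension.
Variable p : nat.

Definition pcoset (gT : finGroupType) (N : {set gT}) (g : gT) : {set gT} :=
  [set x in N :* g | p.-elt x].

(* A p-element of a quotient lifts to a p-element (take a Sylow subgroup *)
(* of the preimage of the cyclic group it generates).                    *)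
Lemma lift_p_elt (gT : finGroupType) (K : {group gT}) (y : coset_of K) :
  p.-elt y -> exists2 h, h \in 'N(K) & p.-elt h /\ coset K h = y.
Proof.
move=> py; have [P sylP] := Sylow_exists p (coset K @*^-1 <[y]>)%G.
have sPN : P \subset 'N(K) := subset_trans (pHall_sub sylP) (subsetIl _ _).
have := morphim_pHall (coset_morphism K) sPN sylP.
rewrite /= morphpreK ?sub_im_coset // => /pHall_id/(_ py) defY.
have : y \in coset K @* P by rewrite defY cycle_id.
case/morphimP=> h Nh Ph ->; exists h => //; split=> //.
exact: mem_p_elt (pHall_pgroup sylP) Ph.
Qed.

Lemma lift_pcoset (gT : finGroupType) (N K : {group gT}) (g : gT) y :
  K <| N -> g \in 'N(K) -> y \in pcoset (N / K) (coset K g) ->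
  exists2 h, h \in pcoset N g & coset K h = y.
Proof.
move=> nsKN nKg; rewrite inE => /andP[Ny py].
have [h nKh [ph defy]] := lift_p_elt py; exists h => //.
rewrite inE ph andbT mem_rcoset -(quotientGK nsKN) mem_morphpre ?groupM ?groupV //.
by rewrite morphM ?groupV // morphV //= defy -mem_rcoset.
Qed.

Lemma class_sub_pcoset (gT : finGroupType) (N : {group gT}) (g x : gT) :
  g \in 'N(N) -> x \in pcoset N g -> x ^: N \subset pcoset N g.
Proof.
move=> nNg; rewrite inE => /andP[Ngx px]; apply/subsetP=> _ /imsetP[n Nn ->].
rewrite inE p_eltJ px andbT mem_rcoset conjgE.
have -> : n^-1 * (x * n) * g^-1 = n^-1 * (x * g^-1) * (n ^ g^-1).
  by rewrite conjgE invgK !mulgA mulgKV.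
apply: groupM; first by rewrite groupM ?groupV // -mem_rcoset.
by rewrite memJ_norm ?groupV.
Qed.

Section Extension.
Variables (gT : finGroupType) (N K : {group gT}) (g : gT).
Hypotheses (nsKN : K <| N) (nKg : g \in 'N(K)).

Local Notation fiber y := [set x in pcoset N g | coset K x == y].

Lemma pcoset_sub_fiber h : h \in pcoset N g -> pcoset K h \subset fiber (coset K h).
Proof.
rewrite inE => /andP[Ngh _]; apply/subsetP=> x; rewrite !inE => /andP[Khx ->].
rewrite mem_rcoset in Khx; have defx : x = x * h^-1 * h by rewrite mulgKV.
rewrite andbT {2}defx coset_kerl // eqxx andbT defx mem_rcoset -mulgA.
by apply: groupM; [apply: (subsetP (normal_sub nsKN)) | rewrite -mem_rcoset].
Qed.

(* Summing the bound for K over the fibers gives the bound for N/K times |K|. *)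
Lemma card_pcoset_fibers :
  (forall h, h \in pcoset N g -> #|K| <= Mp p K * #|pcoset K h|) ->
  #|K| * #|pcoset (N / K) (coset K g)| <= Mp p K * #|pcoset N g|.
Proof.
move=> boundK; set Q := pcoset (N / K) (coset K g).
have partP : #|pcoset N g| = \sum_(y : coset_of K) #|fiber y|.
  rewrite -sum1_card (partition_big (coset K) xpredT) //=.
  by apply: eq_bigr => y _; rewrite -sum1_card; apply: eq_bigl => x; rewrite inE.
rewrite mulnC -sum_nat_const partP [X in _ <= _ * X](bigID (mem Q)) /= mulnDr.
apply: leq_trans (leq_addr _ _); rewrite big_distrr /=; apply: leq_sum => y Qy.
have [h Ngh <-] := lift_pcoset nsKN nKg Qy.
by rewrite (leq_trans (boundK h Ngh)) // leq_mul2l subset_leq_card ?pcoset_sub_fiber ?orbT.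
Qed.

Lemma pcoset_bound_extension :
  #|N / K| <= Mp p (N / K)%G * #|pcoset (N / K) (coset K g)| ->
  (forall h, h \in pcoset N g -> #|K| <= Mp p K * #|pcoset K h|) ->
  #|N| <= Mp p N * #|pcoset N g|.
Proof.
move=> boundNK /card_pcoset_fibers boundK.
rewrite (Mp_normal p nsKN) -(Lagrange (normal_sub nsKN)) -card_quotient ?normal_norm //.
apply: leq_trans (leq_mul (leqnn #|K|) boundNK) _.
by rewrite mulnCA (mulnC (Mp p K)) -mulnA leq_mul2l boundK orbT.
Qed.
End Extension.
End PcosetExtension.

Section MinimalNormal.
Variables (gT : finGroupType) (H N S : {group gT}).
Hypotheses (nsNH : N <| H) (nsolN : ~~ solvable N).
Hypothesis minN : forall K : {group gT}, K <| H -> K \subset N -> K :=: 1 \/ K :=: N.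
Hypotheses (minS : minnormal S N) (sSN : S \subset N).

Definition minsubN (A : {group gT}) : bool := minnormal A N && (A \subset N).

Lemma minsubN_norm (A : {group gT}) : minsubN A -> N \subset 'N(A).
Proof. by case/andP=> /mingroupP[/andP[]]. Qed.

(* Distinct minimal normal subgroups of N intersect trivially, hence commute. *)
Lemma minsubN_cent (A B : {group gT}) : minsubN A -> minsubN B -> A :!=: B -> A \subset 'C(B).
Proof.
move=> mA mB neAB; have nAN := minsubN_norm mA; have nBN := minsubN_norm mB.
case/andP: mA => /mingroupP[_ minA] sAN; case/andP: mB => /mingroupP[_ minB] sBN.
have AB1 : A :&: B = 1.
  apply/eqP; apply: contraR neAB => ntAB.
  have nABN : N \subset 'N(A :&: B) by rewrite normsI.
  have eA : (A :&: B)%G :=: A by apply: minA; rewrite ?ntAB ?subsetIl.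
  have eB : (A :&: B)%G :=: B by apply: minB; rewrite ?ntAB ?subsetIr.
  by rewrite -eA eB.
apply/commG1P/trivgP; rewrite -AB1 subsetI commg_subl commg_subr.
by rewrite (subset_trans sBN) ?(subset_trans sAN).
Qed.

Lemma minsubN_conj (a : gT) : a \in H -> minsubN (S :^ a)%G.
Proof.
move=> Ha; have NNa : N :^ a = N by apply/normP; rewrite (subsetP (normal_norm nsNH)).
rewrite /minsubN /= -NNa conjSg sSN andbT.
have := injm_minnormal (injm_conj [set: gT]%G a) (subsetT S) (subsetT N).
by rewrite !morphim_conj !setTI minS.
Qed.

Lemma ntS : S :!=: 1.
Proof. by case/mingroupP: minS => /andP[]. Qed.

Lemma minsubN_S : minsubN S.
Proof. by rewrite /minsubN minS sSN. Qed.

(* The H-conjugates of S generate N, by minimality of N. *)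
Lemma gen_conj_S : <<class_support S H>> = N.
Proof.
have sCN : <<class_support S H>> \subset N.
  by rewrite gen_subG class_support_sub_norm // normal_norm.
have nsCH : <<class_support S H>> <| H.
  by rewrite /normal (subset_trans sCN (normal_sub nsNH)) norms_gen ?class_support_norm.
case: (minN nsCH sCN) => // C1.
have : S \subset <<class_support S H>>.
  exact: subset_trans (sub_class_support _ _) (subset_gen _).
by rewrite C1 subG1 (negbTE ntS).
Qed.

(* Z(N) is normal in H and abelian, so it is trivial since N is not solvable. *)
Lemma center_N : 'Z(N) = 1.
Proof.
have nsZH : 'Z(N) <| H := char_normal_trans (center_char N) nsNH.
case: (minN nsZH (center_sub N)) => // ZN.
by case/negP: nsolN; apply: abelian_sol; rewrite -ZN center_abelian.
Qed.

(* If S were abelian, N would be generated by commuting abelian conjugates. *)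
Lemma nonabelian_S : ~~ abelian S.
Proof.
apply/negP=> abS; case/negP: nsolN; apply: abelian_sol.
rewrite -gen_conj_S abelian_gen /abelian class_supportEr.
apply/bigcupsP=> x Hx; rewrite centsC; apply/bigcupsP=> y Hy; rewrite centsC.
have [-> | neq] := eqVneq (S :^ y) (S :^ x); first by move: abS; rewrite -(abelianJ S x).
by rewrite eq_sym in neq; apply: minsubN_cent (minsubN_conj Hx) (minsubN_conj Hy) neq.
Qed.

(* The conjugates of S other than S centralise S, so N = S C_N(S). *)
Lemma N_sub_S_centS : N \subset S * 'C_N(S).
Proof.
have nCS : 'C_N(S) \subset 'N(S) by rewrite subIset // minsubN_norm ?minsubN_S.
rewrite -norm_joinEr // -gen_conj_S genS // class_supportEr.
apply/bigcupsP=> x Hx; have [-> | neq] := eqVneq (S :^ x) S; first exact: subsetUl.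
apply: subset_trans (subsetUr _ _); rewrite subsetI.
have /andP[_ sSxN] := minsubN_conj Hx.
by rewrite sSxN (minsubN_cent (minsubN_conj Hx) minsubN_S).
Qed.

(* A normal subgroup of S is normalised by S C_N(S) = N, so S is simple. *)
Lemma simple_S : simple S.
Proof.
apply/mingroupP; split; first by rewrite ntS normG.
move=> T /andP[ntT nTS] sTS; case/mingroupP: minS => _; apply; rewrite // ntT /=.
apply: subset_trans N_sub_S_centS _; rewrite mul_subG // cents_norm //.
by rewrite subIset // orbC centS.
Qed.

(* S meets C_N(S) in Z(S), which is trivial for nonabelian simple S. *)
Lemma S_centS_TI : S :&: 'C_N(S) = 1.
Proof.
have sSC_Z : S :&: 'C_N(S) \subset 'Z(S).
  by rewrite /center subsetI subsetIl subIset // subsetIr orbT.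
suff Z1 : 'Z(S) = 1 by apply/trivgP; rewrite -Z1.
case/simpleP: simple_S => _ /(_ _ (center_normal S)) [-> // | ZS].
by case/negP: nonabelian_S; rewrite -ZS center_abelian.
Qed.

Lemma S_centS_uniq f1 f2 c1 c2 : f1 \in S -> f2 \in S ->
  c1 \in 'C_N(S) -> c2 \in 'C_N(S) -> f1 * c1 = f2 * c2 -> f1 = f2.
Proof.
move=> Sf1 Sf2 Cc1 Cc2 eq12.
have Cf : f2^-1 * f1 \in 'C_N(S).
  have -> : f2^-1 * f1 = c2 * c1^-1 by rewrite -(mulgK c1 f1) eq12 -!mulgA mulKg.
  by rewrite groupM ?groupV.
have : f2^-1 * f1 \in S :&: 'C_N(S) by rewrite inE Cf groupM ?groupV.
by rewrite S_centS_TI inE => /eqP/(canRL (mulKVg f2)); rewrite mulg1.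
Qed.

Variables (p : nat) (g : gT).
Hypotheses (defH : <[g]> * N = H) (pg : p.-elt g).

Lemma g_in_H : g \in H.
Proof. by rewrite -defH; apply/mulsgP; exists g 1; rewrite ?cycle_id ?mulg1. Qed.

Lemma rcoset_sub_H : N :* g \subset H.
Proof. by rewrite mul_subG ?sub1set ?g_in_H ?normal_sub. Qed.

Lemma H_sub_cycle_N x : x \in N :* g -> H \subset <[x]> * N.
Proof.
move=> Ngx; have Hx : x \in H := subsetP rcoset_sub_H x Ngx.
have nNx : <[x]> \subset 'N(N) by rewrite cycle_subG (subsetP (normal_norm nsNH)).
rewrite -norm_joinEl // -defH mul_subG ?joing_subr // cycle_subG.
rewrite mem_rcoset in Ngx; have -> : g = (x * g^-1)^-1 * x by rewrite invMg invgK mulgKV.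
apply: groupM; first by rewrite groupV (subsetP (joing_subr _ _)).
by rewrite (subsetP (joing_subl _ _)) ?cycle_id.
Qed.

(* An element centralising S and commuting with x in N g centralises all *)
(* the H-conjugates of S, hence N.                                        *)
Lemma cent_N_of_cent_S x d : x \in N :* g -> d \in 'C(S) -> d \in 'C[x] -> d \in 'C(N).
Proof.
move=> Ngx CSd Cxd; rewrite -gen_conj_S cent_gen -sub1set centsC class_supportEr.
apply/bigcupsP=> h Hh; rewrite centsC sub1set.
have /mulsgP[_ n /cycleP[i ->] Nn ->] := subsetP (H_sub_cycle_N Ngx) h Hh.
rewrite conjsgM.
have Hxi : x ^+ i \in H by rewrite groupX ?(subsetP rcoset_sub_H).
have /normP-> : n \in 'N(S :^ x ^+ i).
  by rewrite (subsetP (minsubN_norm (minsubN_conj Hxi))).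
rewrite centJ mem_conjg; suff /conjg_fixP-> : [~ d, (x ^+ i)^-1] == 1 by [].
by apply/commgP/cent1P; rewrite cent1C groupV groupX // cent1C.
Qed.

(* C_H(N) meets N in Z(N) = 1, so it embeds in H / N, a p-group. *)
Lemma pgroup_centN : p.-group 'C_H(N).
Proof.
have nNC : 'C_H(N) \subset 'N(N) by rewrite subIset // normal_norm.
have TI : N :&: 'C_H(N) = 1.
  apply/trivgP; rewrite -center_N /center subsetI subsetIl.
  by rewrite subIset // subsetIr orbT.
rewrite (isog_pgroup p (quotient_isog nNC TI)).
apply: pgroupS (_ : 'C_H(N) / N \subset <[g]> / N) _.
  by rewrite -(quotientMidr N <[g]>) defH quotientS // subsetIl.
exact: morphim_pgroup.
Qed.

(* k is the length of the orbit of S under conjugation by <g>: the least *)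
(* j > 0 with S^(g^j) = S (j = #[g] is such an exponent).               *)
Definition orbit_len_pred (j : nat) : bool := (0 < j) && (S :^ (g ^+ j) == S).

Lemma orbit_len_exists : exists j, orbit_len_pred j.
Proof. by exists #[g]; rewrite /orbit_len_pred order_gt0 expg_order conjsg1 eqxx. Qed.

Definition orbit_len : nat := ex_minn orbit_len_exists.
Local Notation k := orbit_len.

Lemma orbit_lenP : [/\ 0 < k, S :^ g ^+ k = S & forall j, 0 < j < k -> S :^ g ^+ j != S].
Proof.
rewrite /k; case: ex_minnP => m /andP[m_gt0 /eqP Sm] min_m; split=> // j /andP[j_gt0 lt_jm].
apply/eqP=> Sj; have := min_m j; rewrite /orbit_len_pred j_gt0 Sj eqxx => /(_ isT).
by rewrite leqNgt lt_jm.
Qed.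

Lemma orbit_len_dvd j : S :^ g ^+ j = S -> k %| j.
Proof.
have [k_gt0 Sk min_k] := orbit_lenP; move=> Sj.
have SkX q : S :^ (g ^+ k) ^+ q = S.
  by elim: q => [|q IHq]; rewrite ?expg0 ?conjsg1 // expgSr conjsgM IHq Sk.
have Smod : S :^ g ^+ (j %% k) = S.
  by move: Sj; rewrite {1}(divn_eq j k) expgD mulnC expgM conjsgM SkX.
rewrite /dvdn; apply: contraTT isT => mod_neq0.
have /min_k : 0 < j %% k < k by rewrite lt0n mod_neq0 ltn_pmod.
by rewrite Smod eqxx.
Qed.

Lemma pnat_orbit_len : p.-nat k.
Proof. by apply: pnat_dvd pg; apply: orbit_len_dvd; rewrite expg_order conjsg1. Qed.

(* For 0 < j < k, the conjugate S^(g^-j) differs from S, so it lies in C_N(S). *)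
Lemma conj_S_centS j : 0 < j < k -> S :^ g ^- j \subset 'C_N(S).
Proof.
have [_ _ min_k] := orbit_lenP; move=> /min_k neqS.
have Hgj : g ^- j \in H by rewrite groupV groupX ?g_in_H.
have /andP[_ sSjN] := minsubN_conj Hgj.
rewrite subsetI sSjN (minsubN_cent (minsubN_conj Hgj) minsubN_S) //.
by apply: contra neqS => /eqP eqS; rewrite -{1}eqS /= conjsgKV.
Qed.

Lemma expg_sg s j : s \in S -> 0 < j <= k ->
  exists2 c, c \in 'C_N(S) & (s * g) ^+ j = s * c * g ^+ j.
Proof.
move=> Ss; elim: j => [// | j IHj] /andP[_ le_jk].
have [-> | j_gt0] := posnP j; first by exists 1; rewrite ?group1 // expg1 mulg1.
have [|c Cc sg_j] := IHj; first by rewrite j_gt0 ltnW.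
have sSjC : S :^ g ^- j \subset 'C_N(S) by apply: conj_S_centS; rewrite j_gt0.
exists (c * s ^ (g ^- j)); first by rewrite groupM // (subsetP sSjC) ?memJ_conjg.
by rewrite expgSr sg_j conjgE invgK expgSr !mulgA mulgKV.
Qed.

Section CosetRepresentative.
(* The candidate x = s g in N g, where s in S is chosen so that           *)
(* b = inn(s) a is a p-element of Aut S with few fixed points, a being   *)
(* the automorphism of S induced by g^k.                                  *)
Variable s : gT.
Hypothesis Ss : s \in S.
Local Notation a := (conj_aut S (g ^+ k)).
Local Notation b := (conj_aut S s * a).
Local Notation x := (s * g).

Lemma sg_in_rcoset : x \in N :* g.
Proof. by rewrite mem_rcoset mulgK (subsetP sSN). Qed.

Lemma conj_aut_sg : x ^+ k \in 'N(S) /\ conj_aut S (x ^+ k) = b.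
Proof.
have [k_gt0 Sk _] := orbit_lenP; have gkN : g ^+ k \in 'N(S) by apply/normP.
have [c /setIP[Nc CSc] ->] := expg_sg Ss (introT andP (conj k_gt0 (leqnn k))).
have sNS : s \in 'N(S) := subsetP (normG S) s Ss.
have cNS : c \in 'N(S) := subsetP (cent_sub S) c CSc.
split; first by rewrite !groupM.
by rewrite !conj_aut_morphM ?groupM // (mker (x := c)) ?mulg1 // ker_conj_aut.
Qed.

(* If b is a p-element so is x: x^(k #[b]) centralises S and x, hence N, *)
(* so it lies in the p-group C_H(N), while k is a p-number.              *)
Lemma p_elt_sg : p.-elt b -> p.-elt x.
Proof.
move=> pb; have [xkN xk_b] := conj_aut_sg; set m := #[b].
have xkmN : x ^+ (k * m) \in 'N(S) by rewrite expgM groupX.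
have xkmC : x ^+ (k * m) \in 'C(S).
  rewrite -ker_conj_aut; apply/kerP => //.
  by rewrite expgM (morphX (conj_aut_morphism S)) //= xk_b expg_order.
have xkmCN : x ^+ (k * m) \in 'C_H(N).
  rewrite inE groupX ?(subsetP rcoset_sub_H) ?sg_in_rcoset //=.
  by apply: (cent_N_of_cent_S sg_in_rcoset xkmC); rewrite groupX ?cent1id.
have pxkm : p.-elt (x ^+ (k * m)) := mem_p_elt pgroup_centN xkmCN.
rewrite /p_elt -(divnK (dvdn_gcdl #[x] (k * m))) pnatM -orderXgcd.
apply/andP; split; first exact: pxkm.
by apply: pnat_dvd (dvdn_gcdr _ _) _; rewrite pnatM pnat_orbit_len.
Qed.

(* Projecting N = S x C_N(S) onto S maps C_N(x) injectively (Z(N) = 1)   *)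
(* into the fixed points of b, since x^k acts on S as b.                 *)
Lemma card_centN_sg : #|'C_N[x]| <= #|fixS S b|.
Proof.
have [xkN xk_b] := conj_aut_sg; set y := x ^+ k in xkN xk_b *.
have Hy : y \in H by rewrite groupX ?(subsetP rcoset_sub_H) ?sg_in_rcoset.
have yN : y \in 'N(N) := subsetP (normal_norm nsNH) y Hy.
have yCS : y \in 'N('C(S)) by apply/normP; rewrite -centJ (normP xkN).
have nCN : N \subset 'N('C_N(S)).
  by rewrite normsI ?normG ?norms_cent ?minsubN_norm ?minsubN_S.
have TI : 'C_N(S) :&: 'C_N[x] = 1.
  apply/trivgP; rewrite -center_N; apply/subsetP=> d.
  case/setIP=> /setIP[_ CSd] /setIP[Nd Cxd].
  by rewrite /center inE Nd (cent_N_of_cent_S sg_in_rcoset CSd Cxd).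
rewrite (card_isog (quotient_isog (subset_trans (subsetIl _ _) nCN) TI)).
apply: leq_trans (leq_imset_card (coset 'C_N(S)) (fixS S b)); apply: subset_leq_card.
apply/subsetP=> _ /morphimP[d _ /setIP[Nd Cxd] ->].
have /mulsgP[f c Sf Cc defd] := subsetP N_sub_S_centS d Nd.
apply/imsetP; exists f; last by rewrite /= defd coset_kerr.
rewrite inE Sf -xk_b norm_conj_autE //=; apply/eqP.
have dy : d ^ y = d.
  by apply/conjg_fixP/commgP/cent1P; rewrite cent1C /y groupX // cent1C.
have Ccy : c ^ y \in 'C_N(S) by have /setIP[Nc CSc] := Cc; rewrite inE !memJ_norm ?Nc ?CSc.
have Sfy : f ^ y \in S by rewrite memJ_norm.
by apply: (S_centS_uniq Sfy Sf Ccy Cc); rewrite -conjMg -defd dy.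
Qed.
End CosetRepresentative.

(* The nonsolvable minimal case of the bound: the N-class of a suitable   *)
(* p-element x = s g has size |N : C_N(x)| >= |N| / M_p(S) and consists  *)
(* of p-elements of N g.                                                 *)
Lemma card_pcoset_nonsolvable : #|N| <= Mp_nonab p S * #|pcoset p N g|.
Proof.
have [_ Sk _] := orbit_lenP; have gkN : g ^+ k \in 'N(S) by apply/normP.
have pa : p.-elt (conj_aut S (g ^+ k)).
  by apply: (morph_p_elt (conj_aut_morphism S) gkN); rewrite p_eltX.
rewrite /Mp_nonab; case: ex_minnP => M boundM _.
have Aa : conj_aut S (g ^+ k) \in Aut S by rewrite Aut_aut.
have /forall_inP/(_ _ Aa) := boundM.
rewrite pa => /exists_inP[s Ss /andP[pb fixb]].
have Ngx : s * g \in pcoset p N g by rewrite inE sg_in_rcoset ?p_elt_sg.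
have nNg : g \in 'N(N) := subsetP (normal_norm nsNH) g g_in_H.
rewrite -(Lagrange (subsetIl N 'C[s * g])) index_cent1.
by rewrite leq_mul ?(leq_trans (card_centN_sg Ss)) ?subset_leq_card ?class_sub_pcoset.
Qed.
End MinimalNormal.

Section PcosetBound.
Variable p : nat.

Lemma pcoset_gt0 (gT : finGroupType) (N : {group gT}) (g : gT) :
  p.-elt g -> 0 < #|pcoset p N g|.
Proof. by move=> pg; apply/card_gt0P; exists g; rewrite inE pg rcoset_refl. Qed.

(* The bound for a q-group N: if q = p the whole coset N g consists of   *)
(* p-elements, and if q <> p then M_p(N) = |N|.                          *)
Lemma card_pcoset_pgroup (q : nat) (gT : finGroupType) (N : {group gT}) (g : gT) :
  prime q -> q.-group N -> g \in 'N(N) -> p.-elt g ->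
  #|N| <= Mp p N * #|pcoset p N g|.
Proof.
move=> q_pr qN nNg; have [<- | neq_qp] := eqVneq q p => pg; last first.
  by rewrite (Mp_pgroup q_pr neq_qp qN) leq_pmulr ?pcoset_gt0.
have defNg : N <*> <[g]> = N * <[g]> :> {set gT} by rewrite norm_joinEr ?cycle_subG.
have qNg : q.-group (N <*> <[g]>) by rewrite defNg pgroupM qN.
suff -> : pcoset q N g = N :* g by rewrite card_rcoset leq_pmull ?Mp_gt0.
apply/setP=> x; rewrite inE andb_idr // => Ngx; apply: mem_p_elt qNg _.
by apply: subsetP Ngx; rewrite /= defNg mulgS // sub1set cycle_id.
Qed.

(* The bound when N is a minimal normal subgroup of H = <g> N: either N  *)
(* is solvable, hence an elementary abelian q-group, or it is covered by *)
(* the nonsolvable case with S a minimal normal subgroup of N.          *)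
Lemma card_pcoset_minimal (gT : finGroupType) (H N : {group gT}) (g : gT) :
  N <| H -> <[g]> * N = H -> p.-elt g ->
  (forall K : {group gT}, K <| H -> K \subset N -> K :=: 1 \/ K :=: N) ->
  #|N| <= Mp p N * #|pcoset p N g|.
Proof.
move=> nsNH defH pg minN; have Hg := g_in_H defH.
have nNg : g \in 'N(N) := subsetP (normal_norm nsNH) g Hg.
have [-> | ntN] := eqVneq N 1%G; first by rewrite cards1 muln_gt0 Mp_gt0 pcoset_gt0.
have [solN | nsolN] := boolP (solvable N).
  have minNH : minnormal N H.
    apply/mingroupP; rewrite ntN normal_norm //; split=> // K /andP[ntK nKH] sKN.
    have nsKH : K <| H by rewrite /normal (subset_trans sKN (normal_sub nsNH)) nKH.
    by case: (minN K nsKH sKN) => // K1; rewrite K1 eqxx in ntK.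
  have [_ _ /abelem_pgroup qN] := minnormal_solvable minNH (subxx N) solN.
  by apply: card_pcoset_pgroup qN nNg pg; rewrite pdiv_prime // cardG_gt1.
have [S minS sSN] := minnormal_exists ntN (normG N).
have simS := simple_S nsNH minN minS sSN.
have nonprime_S : ~~ prime #|S|.
  by apply: contra (nonabelian_S nsNH nsolN minN minS sSN) => /prime_cyclic/cyclic_abelian.
have MpS : Mp_nonab p S = Mp p S by rewrite Mp_simple_group // /Mp_simple (negbTE nonprime_S).
apply: leq_trans (card_pcoset_nonsolvable nsNH nsolN minN minS sSN defH pg) _.
rewrite MpS leq_mul2r Mp_normal_le ?orbT //.
by case/mingroupP: minS => /andP[_ nSN] _; rewrite /normal sSN.
Qed.

(* Main bound, by induction on |N|: if H = <g> N has a normal subgroup K *)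
(* strictly between 1 and N, apply induction to K and N / K and combine  *)
(* them by pcoset_bound_extension; otherwise N is minimal normal in H.   *)
Lemma card_pcoset_bound (gT : finGroupType) (N : {group gT}) (g : gT) :
  g \in 'N(N) -> p.-elt g -> #|N| <= Mp p N * #|pcoset p N g|.
Proof.
have [n] := ubnP #|N|; elim: n gT N g => // n IHn gT N g /ltnSE-leNn nNg pg.
pose H := (<[g]> <*> N)%G.
have defH : <[g]> * N = H by rewrite /= norm_joinEl ?cycle_subG.
have nsNH : N <| H by rewrite /normal joing_subr join_subG cycle_subG nNg normG.
have [/existsP[K /and4P[nsKH sKN ntK neKN]] | noK] := boolP [exists K : {group gT},
    [&& K <| H, K \subset N, K != 1 :> {set gT} & K != N :> {set gT}]]; last first.
  apply: card_pcoset_minimal nsNH defH pg _ => K nsKH sKN.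
  move/existsPn/(_ K): noK; rewrite nsKH sKN /= negb_and !negbK.
  by case/orP=> /eqP->; [left | right].
have nsKN : K <| N := normalS sKN (normal_sub nsNH) nsKH.
have nKH := normal_norm nsKH; have nKg : g \in 'N(K) := subsetP nKH g (g_in_H defH).
have ltKN : #|K| < #|N| by rewrite proper_card // properEneq neKN sKN.
apply: (pcoset_bound_extension nsKN nKg) => [|h]; last first.
  rewrite inE => /andP[Ngh ph]; apply: IHn ph; first exact: leq_trans ltKN leNn.
  exact: subsetP nKH h (subsetP (rcoset_sub_H nsNH defH) h Ngh).
apply: IHn; last exact: morph_p_elt.
  rewrite (leq_trans _ leNn) // -(Lagrange (normal_sub nsKN)) card_quotient ?normal_norm //.
  by rewrite ltn_Pmull ?cardG_gt0 // cardG_gt1.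
by rewrite -cycle_subG -quotient_cycle ?quotient_norms ?cycle_subG.
Qed.

(* Part (ii), the case g = 1 of the bound. *)
Lemma card_Ord (gT : finGroupType) (G : {group gT}) : #|G| <= Mp p G * #|Ord G p|.
Proof. by have := card_pcoset_bound (group1 'N(G)) (p_elt1 gT p); rewrite /pcoset rcoset1. Qed.
End PcosetBound.

Unset Implicit Arguments.
Theorem corollary2p3 (p : nat) (hp : prime p) :
  (* (i) *)
  (forall (gT : finGroupType) (G N : {group gT}),
      N <| G -> Mp p G = (Mp p N * Mp p (G / N)%G)%N) /\
  (* (ii) |G| / |Ord(G,p)| <= M_p(G), written without division *)
  (forall (gT : finGroupType) (G : {group gT}),
      #|G| <= Mp p G * #|Ord G p|) /\
  (* (iii) subdirect subgroups of G_1 x ... x G_t *)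
  (forall (t : nat) (gT : 'I_t -> finGroupType)
          (Gi : forall i : 'I_t, {group gT i}) (G : {group prodG gT}),
      G \subset [set f : prodG gT | [forall i, proj i f \in Gi i]] ->
      (forall i : 'I_t, [set proj i f | f in G] = Gi i :> {set gT i}) ->
      Mp p G <= \prod_(i < t) Mp p (Gi i)).
Proof.
split; first by move=> gT G N; apply: Mp_normal.
split; first by move=> gT G; apply: card_Ord.
by move=> t gT Gi G _ subdirectG; apply: Mp_subdirect.
Qed.
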